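(* Let $X,X_1,X_2,\dots$ be real random variables on a probability space $(\Omega,\mathcal{F},P)$, and let $F$ and $F_n$ be the distribution functions of $X$ and $X_n$. Suppose that $F$ is locally Lipschitz continuous at each continuity point of $F$, and that $\sum_{n=1}^\infty\|X_n-X\|_\infty<\infty$. Then for every continuity point $x$ of $F$, $\sum_{n=1}^\infty |F_n(x)-F(x)|<\infty$.
   Context: The distribution function of a random variable $Y$ is $x\mapsto P(Y\le x)$. $\|\cdot\|_\infty$ denotes the essential supremum norm, i.e. the $L^\infty(P)$ norm. ''$F$ is locally Lipschitz continuous at $x$'' means that there exist constants $K\ge 0$ and $\delta>0$ such that $|F(u)-F(v)|\le K|u-v|$ for all $u,v\in(x-\delta,x+\delta)$. *)

From HB Require Import structures.
From mathcomp Require Import all_boot all_order all_algebra.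
From mathcomp Require Import all_classical all_reals all_analysis.
Set Implicit Arguments. Unset Strict Implicit. Unset Printing Implicit Defensive.
Import Order.TTheory GRing.Theory Num.Theory numFieldNormedType.Exports.
Local Open Scope classical_set_scope.
Local Open Scope ring_scope.

(* Distribution function of a real random variable Y: x |-> P(Y <= x),
   as a real number (P is a probability, so the value is finite). *)
Definition distrfun d (T : measurableType d) (R : realType)
  (P : probability T R) (Y : T -> R) (x : R) : R :=
  fine (P [set w | Y w <= x]).

Definition locally_lipschitz_at (R : realType) (F : R -> R) (x : R) : Prop :=
  exists K : R, 0 <= K /\ exists delta : R, 0 < delta /\
    forall u v : R, `|u - x| < delta -> `|v - x| < delta ->
      `|F u - F v| <= K * `|u - v|.

Definition Linf_norm d (T : measurableType d) (R : realType)
  (P : probability T R) (Y : T -> R) : \bar R :=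
  Lnorm P +oo%E (EFin \o Y).

From HB Require Import structures.
From mathcomp Require Import all_boot all_order all_algebra.
From mathcomp Require Import all_classical all_reals all_analysis.
From mathcomp Require Import lra.
Set Implicit Arguments. Unset Strict Implicit. Unset Printing Implicit Defensive.
Import Order.TTheory GRing.Theory Num.Theory numFieldNormedType.Exports.
Local Open Scope classical_set_scope.
Local Open Scope ring_scope.

(* If [|Y - X| <= r] almost surely then [F_X (x - r) <= F_Y x <= F_X (x + r)],
   so near a continuity point the local Lipschitz bound of [F_X] gives
   [|F_Y x - F_X x| <= C r] for small [r]; for large [r] the trivial bound
   [|F_Y x - F_X x| <= 1 <= r / delta] suffices.  Taking [r = ||X_n - X||_oo],
   the series is dominated by [C] times the convergent series of norms. *)

Lemma locally_lipschitz_sandwich (R : realType) (F : R -> R) (x : R) :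
  locally_lipschitz_at F x ->
  exists2 C : R, 0 < C & forall g r : R, 0 <= r -> `|g - F x| <= 1 ->
    F (x - r) <= g <= F (x + r) -> `|g - F x| <= C * r.
Proof.
move=> [K [K0 [del [del0 lipF]]]].
have idel0 : 0 < del^-1 by rewrite invr_gt0.
exists (K + del^-1) => [|g r r0 g1 /andP[gl gu]]; first lra.
rewrite mulrDl; have [r_small|r_large] := ltP r del.
- have hxr : x + r - x = r by rewrite addrAC subrr add0r.
  have hrx : x - r - x = - r by rewrite addrAC subrr add0r.
  have hxxr : x - (x - r) = r by rewrite opprB addrC subrK.
  have upper := lipF (x + r) x; rewrite hxr subrr normr0 in upper.
  have lower := lipF x (x - r); rewrite hrx hxxr subrr normr0 in lower.
  rewrite normrN ger0_norm // in upper lower.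
  move: (upper r_small del0) (lower del0 r_small).
  rewrite !ler_norml => /andP[_ up] /andP[_ lo].
  have : 0 <= del^-1 * r by rewrite mulr_ge0 // ltW.
  lra.
- have : 1 <= del^-1 * r by rewrite mulrC ler_pdivlMr // mul1r.
  have : 0 <= K * r by rewrite mulr_ge0.
  lra.
Qed.

Section distribution_function.
Context d (T : measurableType d) (R : realType) (P : probability T R).

Lemma measurable_RV_le (Y : {RV P >-> R}) (a : R) : measurable [set w | Y w <= a].
Proof.
have -> : [set w | Y w <= a] = Y @^-1` `]-oo, a].
  by apply/seteqP; split => w /=; rewrite in_itv.
exact: measurable_funPTI.
Qed.

Lemma distrfun_ge0 (Y : {RV P >-> R}) (x : R) : 0 <= distrfun P Y x.
Proof. exact: fine_ge0. Qed.

Lemma distrfun_le1 (Y : {RV P >-> R}) (x : R) : distrfun P Y x <= 1.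
Proof.
rewrite -[1]/(fine 1%E); apply: fine_le => //.
  exact/fin_num_measure/measurable_RV_le.
exact/probability_le1/measurable_RV_le.
Qed.

Lemma distrfun_le_ae (Y Z : {RV P >-> R}) (x y : R) :
  (\forall w \ae P, Y w <= x -> Z w <= y) -> distrfun P Y x <= distrfun P Z y.
Proof.
move=> [N [mN PN subN]].
have mY := measurable_RV_le Y x; have mZ := measurable_RV_le Z y.
have YZN : [set w | Y w <= x] `<=` [set w | Z w <= y] `|` N.
  move=> w /= Yw; have [Zw|Zw] := boolP (Z w <= y); first by left.
  by right; apply: subN => /= /(_ Yw); apply/negP.
apply: fine_le; [exact: fin_num_measure..|].
rewrite -(measureU0 mZ mN PN); apply: le_measure YZN; rewrite inE //.
exact: measurableU.
Qed.

Lemma distrfun_sandwich_ae (X Y : {RV P >-> R}) (r x : R) :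
  (\forall w \ae P, `|Y w - X w| <= r) ->
  distrfun P X (x - r) <= distrfun P Y x <= distrfun P X (x + r).
Proof.
move=> YXr; apply/andP; split; apply: distrfun_le_ae; apply: filterS YXr => w;
  rewrite ler_norml; lra.
Qed.

Lemma ae_le_Linf_norm (f : T -> R) (r : R) : Linf_norm P f = r%:E ->
  \forall w \ae P, `|f w| <= r.
Proof.
have P1 : (0 < P [set: T])%E by rewrite probability_setT lte01.
rewrite /Linf_norm unlock /= (ifT _ _ P1) => fr.
have := ess_sup_inf.ess_sup_ge P (abse \o (EFin \o f)); rewrite fr.
by apply: filterS => w /=; rewrite lee_fin.
Qed.

Lemma distrfun_dist_le_Linf (X Y : {RV P >-> R}) (x C : R) : 0 < C ->
  (forall g r : R, 0 <= r -> `|g - distrfun P X x| <= 1 ->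
    distrfun P X (x - r) <= g <= distrfun P X (x + r) ->
    `|g - distrfun P X x| <= C * r) ->
  ((`|distrfun P Y x - distrfun P X x|)%:E
    <= C%:E * Linf_norm P (fun w => (Y w - X w)%R))%E.
Proof.
move=> C0 sandwichC.
have := Lnorm_ge0 P +oo%E (EFin \o (fun w => Y w - X w)).
rewrite -/(Linf_norm _ _).
case YX: (Linf_norm _ _) => [r| |] // r0; last by rewrite mulry gtr0_sg // mul1e leey.
rewrite lee_fin in r0; rewrite -EFinM lee_fin; apply: sandwichC => //.
- have := distrfun_ge0 Y x; have := distrfun_le1 Y x.
  have := distrfun_ge0 X x; have := distrfun_le1 X x.
  rewrite ler_norml; lra.
- exact/distrfun_sandwich_ae/ae_le_Linf_norm.
Qed.

End distribution_function.

Theorem proposition3p1 (d : measure_display) (T : measurableType d)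
  (R : realType) (P : probability T R)
  (X : {RV P >-> R}) (Xn : nat -> {RV P >-> R}) :
  (forall x : R, {for x, continuous (distrfun P X)} ->
     locally_lipschitz_at (distrfun P X) x) ->
  (\sum_(1 <= n <oo) Linf_norm P (fun w => (Xn n w - X w)%R) < +oo)%E ->
  forall x : R, {for x, continuous (distrfun P X)} ->
    (\sum_(1 <= n <oo) (`|distrfun P (Xn n) x - distrfun P X x|)%:E < +oo)%E.
Proof.
move=> lipF sum_norms x Fx.
have [C C0 sandwichC] := locally_lipschitz_sandwich (lipF x Fx).
apply: (le_lt_trans (lee_nneseries (v := fun n =>
  (C%:E * Linf_norm P (fun w => (Xn n w - X w)%R))%E) _ _)).
- by move=> n _ _; rewrite lee_fin normr_ge0.
- by move=> n _; exact: distrfun_dist_le_Linf C0 sandwichC.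
rewrite nneseriesZl; last by move=> n _; exact: Lnorm_ge0.
by apply: lte_mul_pinfty => //; rewrite lee_fin; exact: ltW.
Qed.
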